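(* Let $\mathcal H$ be a separable complex Hilbert space, $C\in L(\mathcal H)$, $A=C^*C$, and $\mathcal S$ a closed subspace such that $(A,\mathcal S)$ is compatible. Then for every nonzero $x\in\mathcal H$, $$sp(C,\mathcal S,x)=\{(I-T)x:\ T\in\Pi(A,\mathcal S)\}.$$
   Context: $sp(C,\mathcal S,x)=\{y\in x+\mathcal S:\ \|Cy\|=\inf_{s\in\mathcal S}\|C(x+s)\|\}$ (the set of abstract splines). $(A,\mathcal S)$ is compatible if there exists $Q\in L(\mathcal H)$ with $Q^2=Q$, $R(Q)=\mathcal S$, $AQ=Q^*A$. $\Pi(A,\mathcal S)$ is the set of $T\in L(\mathcal H)$ with $R(T)\subseteq\mathcal S$ and $\|y-Ty\|_A\le\|y-s\|_A$ for all $y\in\mathcal H$, $s\in\mathcal S$, where $\|z\|_A=\langle Az,z\rangle^{1/2}$. *)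

From mathcomp Require Import all_boot all_algebra.
From mathcomp Require Export complex.
From mathcomp Require Export reals classical_sets.
Set Implicit Arguments.
Unset Strict Implicit.
Unset Printing Implicit Defensive.
Import GRing.Theory Num.Theory.
Local Open Scope ring_scope.
Local Open Scope classical_set_scope.

Section Hilbert.
Variables (R : realType) (V : lmodType R[i]).

Definition inner_product (ip : V -> V -> R[i]) : Prop :=
  [/\ (forall (a : R[i]) (x y z : V), ip (a *: x + y) z = a * ip x z + ip y z),
      (forall x y : V, ip y x = (ip x y)^*),
      (forall x : V, 0 <= ip x x) &
      (forall x : V, ip x x = 0 -> x = 0)].

Definition hnorm (ip : V -> V -> R[i]) (x : V) : R := Num.sqrt (@complex.Re R (ip x x)).

Definition cauchy_seq (ip : V -> V -> R[i]) (u : nat -> V) : Prop :=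
  forall eps : R, 0 < eps -> exists N : nat, forall m n : nat,
    (N <= m)%N -> (N <= n)%N -> hnorm ip (u m - u n) < eps.

Definition converges_to (ip : V -> V -> R[i]) (u : nat -> V) (l : V) : Prop :=
  forall eps : R, 0 < eps -> exists N : nat, forall n : nat,
    (N <= n)%N -> hnorm ip (u n - l) < eps.

Definition separable_hilbert (ip : V -> V -> R[i]) : Prop :=
  [/\ inner_product ip,
      (forall u : nat -> V, cauchy_seq ip u -> exists l, converges_to ip u l) &
      (exists d : nat -> V, forall (x : V) (eps : R), 0 < eps ->
          exists n : nat, hnorm ip (x - d n) < eps)].

Definition bounded_op (ip : V -> V -> R[i]) (T : V -> V) : Prop :=
  (forall (a : R[i]) (x y : V), T (a *: x + y) = a *: T x + T y) /\
  exists M : R, forall x : V, hnorm ip (T x) <= M * hnorm ip x.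

Definition is_adjoint (ip : V -> V -> R[i]) (T Ts : V -> V) : Prop :=
  forall x y : V, ip (T x) y = ip x (Ts y).

Definition closed_subspace (ip : V -> V -> R[i]) (S : set V) : Prop :=
  [/\ S 0,
      (forall (a : R[i]) (x y : V), S x -> S y -> S (a *: x + y)) &
      (forall (u : nat -> V) (l : V), (forall n, S (u n)) ->
          converges_to ip u l -> S l)].

Definition compatible (ip : V -> V -> R[i]) (A : V -> V) (S : set V) : Prop :=
  exists Q : V -> V, [/\ bounded_op ip Q,
      (forall x, Q (Q x) = Q x),
      range Q = S &
      exists Qs : V -> V, is_adjoint ip Q Qs /\
        (forall x, A (Q x) = Qs (A x))].

Definition Anorm (ip : V -> V -> R[i]) (A : V -> V) (z : V) : R :=
  Num.sqrt (@complex.Re R (ip (A z) z)).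

Definition Pi (ip : V -> V -> R[i]) (A : V -> V) (S : set V) : set (V -> V) :=
  [set T | [/\ bounded_op ip T, range T `<=` S &
     forall y s : V, S s -> Anorm ip A (y - T y) <= Anorm ip A (y - s)]].

Definition sp (ip : V -> V -> R[i]) (C : V -> V) (S : set V) (x : V) : set V :=
  [set y | (exists2 s, S s & y = x + s) /\
     hnorm ip (C y) = inf [set hnorm ip (C (x + s)) | s in S]].

End Hilbert.

(* The compatible projection Q onto S satisfies A Q = Q^* A, which makes
   C (y - Q y) orthogonal to C S; by Pythagoras, Q y is then a best
   A-approximation of y from S, and x + s is a spline exactly when it differs
   from x - Q x by an element of S ∩ ker C.  A spline x + s0 is thus reached
   by the operator T = Q - <., x>/<x, x> t with t = Q x + s0: it maps into S,
   satisfies C (I - T) = C (I - Q), hence lies in Pi(A, S), and (I - T) x =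
   x + s0.  Conversely, (I - T) x minimizes ||C (x + s)|| for T in Pi(A, S)
   because ||z||_A = ||C z||. *)
From mathcomp Require Import all_boot all_order all_algebra.
From mathcomp Require Import complex reals classical_sets.
From mathcomp Require Import ring.
Import Order.TTheory GRing.Theory Num.Theory.
Local Open Scope ring_scope.
Local Open Scope classical_set_scope.

Section InnerProduct.
Context {R : realType} {V : lmodType R[i]} {ip : V -> V -> R[i]}.
Hypothesis hip : inner_product ip.

Lemma ip0l z : ip 0 z = 0.
Proof.
case: hip => lin _ _ _; have := lin 1 0 0 z.
by rewrite scale1r addr0 mul1r => /eqP; rewrite addrC -subr_eq subrr => /eqP.
Qed.

Lemma ipDl x y z : ip (x + y) z = ip x z + ip y z.
Proof. by case: hip => lin _ _ _; rewrite -[x]scale1r lin mul1r scale1r. Qed.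

Lemma ipZl a x z : ip (a *: x) z = a * ip x z.
Proof. by case: hip => lin _ _ _; rewrite -[a *: x]addr0 lin ip0l addr0. Qed.

Lemma ipNl x z : ip (- x) z = - ip x z.
Proof. by rewrite -scaleN1r ipZl mulN1r. Qed.

Lemma ipC x y : ip y x = (ip x y)^*.
Proof. by case: hip. Qed.

Lemma ipDr x y z : ip z (x + y) = ip z x + ip z y.
Proof. by rewrite ipC ipDl rmorphD /= -!ipC. Qed.

Lemma ipZr a x z : ip z (a *: x) = a^* * ip z x.
Proof. by rewrite ipC ipZl rmorphM /= -!ipC. Qed.

Lemma ipNr x z : ip z (- x) = - ip z x.
Proof. by rewrite ipC ipNl rmorphN /= -!ipC. Qed.

Lemma ipxx_ge0 z : 0 <= ip z z.
Proof. by case: hip. Qed.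

Lemma ipxx_eq0 z : (ip z z == 0) = (z == 0).
Proof.
apply/eqP/eqP => [|->]; last exact: ip0l.
by case: hip => _ _ _; apply.
Qed.

Lemma ipxx_Re z : (complex.Re (ip z z))%:C%C = ip z z.
Proof. exact/RRe_real/ger0_real/ipxx_ge0. Qed.

Lemma conj_ipxx z : (ip z z)^* = ip z z.
Proof. exact/conj_Creal/ger0_real/ipxx_ge0. Qed.

Lemma ipxxD a b : ip (a + b) (a + b) = ip a a + ip b b + (ip a b + ip b a).
Proof. rewrite ipDl !ipDr; ring. Qed.

Lemma pythagoras a b : ip a b = 0 -> ip (a + b) (a + b) = ip a a + ip b b.
Proof. by move=> ab0; rewrite ipxxD ab0 (ipC a b) ab0 conjC0 !addr0. Qed.

Lemma ipxxD_le a b : ip (a + b) (a + b) <= 2%:R * ip a a + 2%:R * ip b b.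
Proof.
rewrite -subr_ge0.
have -> : 2%:R * ip a a + 2%:R * ip b b - ip (a + b) (a + b) =
          ip (a - b) (a - b).
  by rewrite !ipxxD ipNl ipNr ipNl ipNr opprK; ring.
exact: ipxx_ge0.
Qed.

Lemma ipxxZ c a : ip (c *: a) (c *: a) = `|c| ^+ 2 * ip a a.
Proof. by rewrite ipZl ipZr mulrA normCK. Qed.

Lemma bessel_ineq x z : x != 0 -> `|ip z x / ip x x| ^+ 2 * ip x x <= ip z z.
Proof.
rewrite -ipxx_eq0 => x0; set c := ip z x / ip x x.
have orth : ip (c *: x) (z - c *: x) = 0.
  by rewrite ipZl ipC ipDl ipNl ipZl divfK // subrr conjC0 mulr0.
by rewrite -[in leRHS](subrKC (c *: x) z) pythagoras // ipxxZ lerDl ipxx_ge0.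
Qed.

Lemma hnorm_ge0 z : 0 <= hnorm ip z.
Proof. exact: sqrtr_ge0. Qed.

Lemma hnorm_sqr z : hnorm ip z ^+ 2 = complex.Re (ip z z).
Proof. by rewrite sqr_sqrtr // -ler0c ipxx_Re ipxx_ge0. Qed.

Lemma ler_hnorm a b : (hnorm ip a <= hnorm ip b) = (ip a a <= ip b b).
Proof.
rewrite -ler_sqr ?nnegrE ?hnorm_ge0 // !hnorm_sqr.
by rewrite -lecR !ipxx_Re.
Qed.

Lemma hnorm_le_scale k a b : 0 <= k -> ip a a <= k * ip b b ->
  hnorm ip a <= Num.sqrt (complex.Re k) * hnorm ip b.
Proof.
move=> k0 hab; have kRe : (complex.Re k)%:C%C = k by exact/RRe_real/ger0_real.
rewrite /hnorm -sqrtrM; last by rewrite -ler0c kRe.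
by apply: ler_wsqrtr; rewrite -lecR rmorphM /= kRe !ipxx_Re.
Qed.

End InnerProduct.

Section BoundedOperators.
Context {R : realType} {V : lmodType R[i]} {ip : V -> V -> R[i]}.
Hypothesis hip : inner_product ip.

Lemma opD {T : V -> V} : bounded_op ip T -> forall x y, T (x + y) = T x + T y.
Proof. by case=> lin _ x y; rewrite -[x]scale1r lin !scale1r. Qed.

Lemma opZ {T : V -> V} : bounded_op ip T -> forall a x, T (a *: x) = a *: T x.
Proof.
move=> bT a x; have T0 : T 0 = 0.
  by apply: (@addrI _ (T 0)); rewrite addr0 -(opD bT) addr0.
by case: bT => lin _; rewrite -[a *: x]addr0 lin T0 addr0.
Qed.

Lemma opB {T : V -> V} : bounded_op ip T -> forall x y, T (x - y) = T x - T y.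
Proof. by move=> bT x y; rewrite (opD bT) -scaleN1r (opZ bT) scaleN1r. Qed.

Lemma bounded_op_sqr {T : V -> V} : bounded_op ip T ->
  exists2 k : R[i], 0 <= k & forall z, ip (T z) (T z) <= k * ip z z.
Proof.
case=> _ [M hM]; exists (M ^+ 2)%:C%C => [|z]; first by rewrite ler0c sqr_ge0.
rewrite -(ipxx_Re hip (T z)) -(ipxx_Re hip z) -rmorphM lecR -!hnorm_sqr //.
have Mz := hM z.
by rewrite -exprMn ler_sqr ?nnegrE ?hnorm_ge0 ?(le_trans (hnorm_ge0 (T z)) Mz).
Qed.

Lemma bounded_op_of_sqr T :
  (forall a x y, T (a *: x + y) = a *: T x + T y) ->
  (exists2 k : R[i], 0 <= k & forall z, ip (T z) (T z) <= k * ip z z) ->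
  bounded_op ip T.
Proof.
move=> lin [k k0 hk]; split=> //.
by exists (Num.sqrt (complex.Re k)) => z; apply: hnorm_le_scale.
Qed.

Lemma bounded_opB {T1 T2 : V -> V} : bounded_op ip T1 -> bounded_op ip T2 ->
  bounded_op ip (fun z => T1 z - T2 z).
Proof.
move=> b1 b2; apply: bounded_op_of_sqr.
  move=> a x y; rewrite (opD b1) (opD b2) (opZ b1) (opZ b2) scalerBr.
  by rewrite opprD addrACA.
have [k1 k10 hk1] := bounded_op_sqr b1; have [k2 k20 hk2] := bounded_op_sqr b2.
exists (2%:R * k1 + 2%:R * k2) => [|z]; first by rewrite addr_ge0 ?mulr_ge0.
apply: le_trans (ipxxD_le hip _ _) _.
rewrite (ipNl hip) (ipNr hip) opprK [leRHS]mulrDl -!mulrA.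
by apply: lerD; rewrite ler_pM2l ?ltr0n.
Qed.

Lemma bounded_op_rank1 x t : x != 0 ->
  bounded_op ip (fun z => (ip z x / ip x x) *: t).
Proof.
move=> x0; have d0 : 0 < ip x x.
  by rewrite lt0r (ipxx_eq0 hip) x0 (ipxx_ge0 hip).
apply: bounded_op_of_sqr.
  move=> a u w; rewrite (ipDl hip) (ipZl hip) mulrDl scalerDl.
  by rewrite -mulrA scalerA.
exists (ip t t / ip x x) => [|z].
  by rewrite divr_ge0 ?(ipxx_ge0 hip) ?ltW.
set c := ip z x / ip x x.
have -> : ip (c *: t) (c *: t) = `|c| ^+ 2 * ip x x * (ip t t / ip x x).
  by rewrite (ipxxZ hip); field; exact: lt0r_neq0.
rewrite [_ * ip z z]mulrC; apply: ler_wpM2r; last exact: bessel_ineq.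
by rewrite divr_ge0 ?(ipxx_ge0 hip) ?ltW.
Qed.

End BoundedOperators.

Section Splines.
Context {R : realType} {V : lmodType R[i]} {ip : V -> V -> R[i]}.
Hypothesis hip : inner_product ip.

Lemma closed_subspaceD {S : set V} {a b : V} :
  closed_subspace ip S -> S a -> S b -> S (a + b).
Proof. by case=> _ Slin _ Sa Sb; have := Slin 1 a b Sa Sb; rewrite scale1r. Qed.

Lemma closed_subspaceN {S : set V} {s : V} :
  closed_subspace ip S -> S s -> S (- s).
Proof.
by case=> S0 Slin _ Ss; have := Slin (-1) s 0 Ss S0; rewrite scaleN1r addr0.
Qed.

Lemma Anorm_adjoint {C Cs : V -> V} z : is_adjoint ip C Cs ->
  Anorm ip (fun z => Cs (C z)) z = hnorm ip (C z).
Proof.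
by move=> adjC; rewrite /Anorm /hnorm (ipC hip) -adjC (conj_ipxx hip).
Qed.

Lemma spline_lbound (C : V -> V) (S : set V) x :
  has_lbound [set hnorm ip (C (x + s)) | s in S].
Proof. by exists 0 => _ [s _ <-]; exact: hnorm_ge0. Qed.

Lemma Pi_residual_sp {C Cs : V -> V} {S : set V} {T : V -> V} x :
  is_adjoint ip C Cs -> closed_subspace ip S ->
  Pi ip (fun z => Cs (C z)) S T -> sp ip C S x (x - T x).
Proof.
move=> adjC cS [_ rT opt].
have STx : S (- T x) by apply: (closed_subspaceN cS); apply: rT; exists x.
split; first by exists (- T x).
apply/le_anti/andP; split.
  2: by apply: (ge_inf (spline_lbound C S x)); exists (- T x).
apply: lb_le_inf; first by exists (hnorm ip (C (x + 0))), 0; case: cS.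
move=> _ [s Ss <-]; rewrite -(opprK s) -!(Anorm_adjoint _ adjC).
exact/opt/(closed_subspaceN cS).
Qed.

End Splines.

Section CompatibleProjection.
Context {R : realType} {V : lmodType R[i]} {ip : V -> V -> R[i]}.
Context {C Cs Q Qs : V -> V} {S : set V}.
Hypotheses (hip : inner_product ip) (bC : bounded_op ip C).
Hypotheses (adjC : is_adjoint ip C Cs) (cS : closed_subspace ip S).
Hypotheses (bQ : bounded_op ip Q) (QQ : forall x, Q (Q x) = Q x).
Hypotheses (rQ : range Q = S) (adjQ : is_adjoint ip Q Qs).
Hypothesis AQ : forall x, Cs (C (Q x)) = Qs (Cs (C x)).

Lemma proj_in_S y : S (Q y).
Proof. by rewrite -rQ; exists y. Qed.

Lemma proj_id {t : V} : S t -> Q t = t.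
Proof. by rewrite -rQ => -[w _ <-]. Qed.

Lemma residual_orthogonal y t : S t -> ip (C (y - Q y)) (C t) = 0.
Proof.
move=> St; rewrite adjC -(proj_id St) AQ -adjQ (opB bQ) QQ subrr.
exact: (ip0l hip).
Qed.

Lemma residualE y t : S t ->
  ip (C (y - Q y + t)) (C (y - Q y + t)) =
  ip (C (y - Q y)) (C (y - Q y)) + ip (C t) (C t).
Proof.
by move=> St; rewrite (opD bC) (pythagoras hip) //; apply: residual_orthogonal.
Qed.

Lemma proj_addr_in_S y {s : V} : S s -> S (Q y + s).
Proof. exact: closed_subspaceD cS (proj_in_S y). Qed.

Lemma residual_minimal y s : S s ->
  ip (C (y - Q y)) (C (y - Q y)) <= ip (C (y - s)) (C (y - s)).
Proof.
move=> Ss; rewrite -(subrKA (Q y) y (- s)) residualE ?lerDl ?(ipxx_ge0 hip) //.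
exact/proj_addr_in_S/(closed_subspaceN cS).
Qed.

Lemma sp_defect_kerC {x s0 : V} :
  sp ip C S x (x + s0) -> S s0 -> C (Q x + s0) = 0.
Proof.
case=> _ hy Ss0; have : hnorm ip (C (x + s0)) <= hnorm ip (C (x - Q x)).
  rewrite hy; apply: (ge_inf (spline_lbound C S x)); exists (- Q x) => //.
  exact: closed_subspaceN cS (proj_in_S x).
rewrite (ler_hnorm hip) -(subrKA (Q x) x s0) residualE ?gerDl.
  2: exact: proj_addr_in_S.
move=> Ct_le0; apply/eqP.
by rewrite -(ipxx_eq0 hip) eq_le Ct_le0 (ipxx_ge0 hip).
Qed.

(* Subtracting the rank-one term moves T x from Q x to - s0 without changing
   C (I - T), since C t = 0. *)
Lemma Pi_rank1_update {x t : V} : x != 0 -> S t -> C t = 0 ->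
  Pi ip (fun z => Cs (C z)) S (fun z => Q z - (ip z x / ip x x) *: t).
Proof.
move=> x0 St Ct0; split.
- exact: (bounded_opB hip bQ (bounded_op_rank1 hip x t x0)).
- move=> _ [z _ <-]; rewrite -scaleNr addrC.
  by case: cS => _ Slin _; apply: Slin (proj_in_S z).
- move=> y s Ss; rewrite !(Anorm_adjoint hip _ adjC) (ler_hnorm hip).
  rewrite opprB addrCA (opD bC (_ *: t)) (opZ bC) Ct0 scaler0 add0r.
  exact: residual_minimal.
Qed.

Lemma sp_sub_Pi_residual x : x != 0 ->
  sp ip C S x `<=` [set x - T x | T in Pi ip (fun z => Cs (C z)) S].
Proof.
move=> x0 y spy; have [[s0 Ss0 ey] _] := spy; rewrite {}ey in spy *.
exists (fun z => Q z - (ip z x / ip x x) *: (Q x + s0)).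
  apply: Pi_rank1_update x0 (proj_addr_in_S x Ss0) _.
  exact: sp_defect_kerC spy Ss0.
rewrite divff ?(ipxx_eq0 hip) // scale1r; congr (_ + _).
by rewrite opprB addrC addKr.
Qed.

End CompatibleProjection.

Theorem mainTheorem11 (R : realType) (V : lmodType R[i]) (ip : V -> V -> R[i])
  (C Cs : V -> V) (S : set V) :
  separable_hilbert ip ->
  bounded_op ip C ->
  is_adjoint ip C Cs ->
  closed_subspace ip S ->
  compatible ip (fun z => Cs (C z)) S ->
  forall x : V, x != 0 ->
    sp ip C S x = [set (x - T x) | T in Pi ip (fun z => Cs (C z)) S].
Proof.
move=> [hip _ _] bC adjC cS [Q [bQ QQ rQ [Qs [adjQ AQ]]]] x x0.
apply/seteqP; split.
  exact: (sp_sub_Pi_residual hip bC adjC cS bQ QQ rQ adjQ AQ).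
by move=> _ [T PiT <-]; apply: (Pi_residual_sp hip x adjC cS PiT).
Qed.
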